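(* Let $p$ be an odd prime and let $G=C_p\rtimes C_{p-1}\cong(\mathbb{F}_p,+)\rtimes(\mathbb{F}_p^\times,\times)$ act on $\mathbb{F}_p[t]/(t-1)^p=\mathbb{F}_p[t]/(t^p-1)$ by $(c,m)\cdot t^x=t^{c+mx}$. Then the $\mathbb{F}_p[G]$-submodule generated by $$\bar y=\sum_{i\in\mathbb{F}_p^\times}i^{-1}t^i$$ equals $(t-1)\mathbb{F}_p[t]/(t-1)^p$, the kernel of the augmentation $\mathbb{F}_p[t]/(t-1)^p\to\mathbb{F}_p$, $t\mapsto1$. *)

From HB Require Import structures.
From mathcomp Require Import all_boot all_order all_algebra.
Set Implicit Arguments. Unset Strict Implicit. Unset Printing Implicit Defensive.
Import GRing.Theory.
Local Open Scope ring_scope.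

(* The ring F_p[t]/(t^p - 1) is represented by polynomials in {poly 'F_p},
   two polynomials denoting the same element iff t^p - 1 divides their
   difference.  For x : 'F_p (an ordinal < p when p is prime), t^x is
   represented by 'X^(val x), which is well defined since t^p = 1. *)

Definition tmod (p : nat) : {poly 'F_p} := 'X^p - 1.

Definition eqmod (p : nat) (q r : {poly 'F_p}) : Prop := tmod p %| (q - r).

Definition tpow (p : nat) (x : 'F_p) : {poly 'F_p} := 'X^(val x).

Definition act (p : nat) (c m : 'F_p) (q : {poly 'F_p}) : {poly 'F_p} :=
  \sum_(i < size q) q`_i *: tpow (c + m * (i%:R)).

Definition ybar (p : nat) : {poly 'F_p} :=
  \sum_(i : 'F_p | i != 0) i^-1 *: tpow i.

(* membership (mod t^p - 1) in the F_p[G]-submodule generated by ybar, i.e.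
   the F_p-span of the G-orbit {(c,m) . ybar : c in F_p, m in F_p^*} *)
Definition in_gen_submodule (p : nat) (q : {poly 'F_p}) : Prop :=
  exists a : 'F_p -> 'F_p -> 'F_p,
    eqmod q (\sum_(c : 'F_p) \sum_(m : 'F_p | m != 0) a c m *: act c m (ybar p)).

Definition in_tminus1_ideal (p : nat) (q : {poly 'F_p}) : Prop :=
  exists r : {poly 'F_p}, eqmod q (('X - 1) * r).

From HB Require Import structures.
From mathcomp Require Import all_boot all_order all_algebra.
From mathcomp Require Import ring.
Set Implicit Arguments. Unset Strict Implicit. Unset Printing Implicit Defensive.
Import GRing.Theory.
Local Open Scope ring_scope.

(* Every element of the G-orbit of [ybar] has the value [ybar(1)] at [t = 1],
   and [ybar(1) = sum of the nonzero i^-1 = 0] because [i |-> -i] pairs the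
   summands and [p] is odd; so the submodule lies in the augmentation ideal.
   Conversely [ybar'(1) = p - 1 = -1], so [ybar = (t - 1) w] with [w(1) <> 0],
   hence [w] is a unit modulo [(t - 1)^p = t^p - 1] and [(t - 1) r] is
   congruent to [ybar * (w^-1 r)].  Reducing [w^-1 r] modulo [t^p - 1] and
   expanding it in the basis [t^c], [ybar * t^c] is the translate
   [(c, 1) . ybar], so this is an F_p-combination of the orbit. *)

Section Congruence.
Variable p : nat.

Lemma eqmod_sym (a b : {poly 'F_p}) : eqmod a b -> eqmod b a.
Proof. by rewrite /eqmod -opprB dvdpNr. Qed.

Lemma eqmod_trans (a b c : {poly 'F_p}) :
  eqmod a b -> eqmod b c -> eqmod a c.
Proof. by rewrite /eqmod => ab bc; have := dvdp_add ab bc; rewrite addrA subrK. Qed.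

Lemma eqmod_sum (I : Type) (r : seq I) (P : pred I) (F G : I -> {poly 'F_p}) :
  (forall i, P i -> eqmod (F i) (G i)) ->
  eqmod (\sum_(i <- r | P i) F i) (\sum_(i <- r | P i) G i).
Proof.
rewrite /eqmod -sumrB => FG.
apply: (big_ind (fun s => tmod p %| s)) => //; exact: dvdp_add.
Qed.

Lemma eqmod_mull (a b c : {poly 'F_p}) : eqmod a b -> eqmod (c * a) (c * b).
Proof. by rewrite /eqmod -mulrBr; apply: dvdp_mull. Qed.

Lemma eqmod_scale (k : 'F_p) (a b : {poly 'F_p}) :
  eqmod a b -> eqmod (k *: a) (k *: b).
Proof. by rewrite -!mul_polyC; apply: eqmod_mull. Qed.

Lemma eqmod_modp (a : {poly 'F_p}) : eqmod a (a %% tmod p).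
Proof. by rewrite /eqmod {1}(divp_eq a (tmod p)) addrK dvdp_mull. Qed.

Lemma eqmod_Xn_modn (n : nat) : eqmod ('X^n : {poly 'F_p}) 'X^(n %% p).
Proof.
rewrite /eqmod /tmod {1}(divn_eq n p) exprD -{2}(mul1r 'X^(n %% p)) -mulrBl.
rewrite dvdp_mulr // mulnC exprM -{2}(expr1n _ (n %/ p)) subrXX.
exact: dvdp_mulr.
Qed.

Lemma horner1_act (c m : 'F_p) (q : {poly 'F_p}) : (act c m q).[1] = q.[1].
Proof.
rewrite /act horner_sum horner_coef; apply: eq_bigr => i _.
by rewrite hornerZ hornerXn !expr1n.
Qed.

End Congruence.

Section PrimeField.
Variable p : nat.
Hypothesis p_prime : prime p.

Lemma tmodE : tmod p = ('X - 1) ^+ p.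
Proof.
have p_char : [pchar {poly 'F_p}].-nat p by rewrite pnatE // pchar_poly pchar_Fp.
by rewrite /tmod exprDn_pchar // exprNn_pchar // expr1n.
Qed.

Lemma size_tmod : size (tmod p) = p.+1.
Proof. by rewrite /tmod -polyC1 size_XnsubC // prime_gt0. Qed.

Lemma tmod_neq0 : tmod p != 0.
Proof. by rewrite -size_poly_eq0 size_tmod. Qed.

Lemma size_modp_tmod (a : {poly 'F_p}) : (size (a %% tmod p)%R <= p)%N.
Proof. by rewrite -ltnS -size_tmod ltn_modp tmod_neq0. Qed.

Lemma poly_Fp_expand (e : {poly 'F_p}) : (size e <= p)%N ->
  e = \sum_(c : 'F_p) e`_(val c) *: 'X^(val c).
Proof.
move=> size_e; apply/polyP => k; rewrite coef_sum.
under eq_bigr do rewrite coefZ coefXn.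
have [k_lt_p | p_le_k] := ltnP k p.
  rewrite (bigD1 k%:R) //= val_Fp_nat // modn_small // eqxx mulr1 big1 ?addr0 //.
  move=> c c_neq_k; case: eqP => [k_c | _]; last by rewrite mulr0.
  by rewrite k_c natr_Zp eqxx in c_neq_k.
rewrite nth_default ?(leq_trans size_e) // big1 // => c _.
have c_lt_p : (val c < p)%N by rewrite -[X in (_ < X)%N](Fp_cast p_prime) ltn_ord.
case: eqP => [k_c | _]; last by rewrite mulr0.
by rewrite -k_c ltnNge p_le_k in c_lt_p.
Qed.

Lemma val_Fp_add_nat (c : 'F_p) (i : nat) : val (c + i%:R) = ((val c + i) %% p)%N.
Proof. by rewrite -[c in LHS]natr_Zp -natrD; exact: val_Fp_nat. Qed.

Lemma act_translate (c : 'F_p) (q : {poly 'F_p}) :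
  eqmod (act c 1 q) ('X^(val c) * q).
Proof.
rewrite -{2}[q]coefK poly_def /act mulr_sumr; apply: eqmod_sum => i _.
rewrite -scalerAr -exprD; apply: eqmod_scale; apply: eqmod_sym.
by rewrite /tpow mul1r val_Fp_add_nat; exact: eqmod_Xn_modn.
Qed.

Lemma in_gen_submodule_ybar_mul (s : {poly 'F_p}) : in_gen_submodule (ybar p * s).
Proof.
set e := s %% tmod p.
exists (fun c m => if m == 1 then e`_(val c) else 0).
apply: (eqmod_trans (eqmod_mull _ (eqmod_modp s))).
rewrite {1}(poly_Fp_expand (size_modp_tmod s)) mulr_sumr; apply: eqmod_sum => c _.
rewrite (bigD1 1) ?oner_neq0 //= big1 ?addr0; last first.
  by move=> m /andP [_ /negbTE ->]; rewrite scale0r.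
rewrite mulrC -scalerAl; apply: eqmod_scale; apply: eqmod_sym.
exact: act_translate.
Qed.

Lemma deriv_ybar_horner1 : (ybar p)^`().[1] = -1.
Proof.
have deriv_term (i : 'F_p) : i != 0 -> (i^-1 *: tpow i)^`().[1] = 1.
  move=> i_neq0; rewrite /tpow derivZ derivXn hornerZ hornerMn hornerXn expr1n.
  by rewrite natr_Zp mulVf.
rewrite /ybar raddf_sum horner_sum (eq_bigr _ deriv_term).
have := sumr_const 'F_p (1 : 'F_p).
rewrite card_Fp // pchar_Fp_0 // (bigD1 0) //= => /eqP.
by rewrite addrC addr_eq0 => /eqP.
Qed.

Hypothesis p_odd : odd p.

Lemma ybar_horner1 : (ybar p).[1] = 0.
Proof.
rewrite /ybar horner_sum.
under eq_bigr => i _ do rewrite hornerZ /tpow hornerXn expr1n mulr1.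
set S := \sum_(i | i != 0) i^-1.
have S_opp : S = - S.
  rewrite {1}/S (reindex_inj oppr_inj) /= -sumrN.
  by apply: eq_big => [i | i _]; rewrite ?oppr_eq0 ?invrN.
have two_neq0 : (2%:R : 'F_p) != 0.
  have p_gt2 : (2 < p)%N.
    by rewrite ltn_neqAle prime_gt1 // andbT; apply: contraTneq p_odd => <-.
  by apply/eqP => two_eq0; have := val_Fp_nat p_prime 2; rewrite two_eq0 modn_small.
have /eqP : S * 2%:R = 0 by rewrite mulr_natr mulr2n {1}S_opp addNr.
by rewrite mulf_eq0 (negbTE two_neq0) orbF => /eqP.
Qed.

Lemma ybar_factor : exists2 w, ybar p = ('X - 1) * w & coprimep w (tmod p).
Proof.
have /factor_theorem [w ybarE] : root (ybar p) 1 by rewrite /root ybar_horner1.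
exists w; first by rewrite ybarE mulrC polyC1.
have w1 : w.[1] = -1.
  move: deriv_ybar_horner1; rewrite ybarE derivM derivXsubC hornerD !hornerM.
  by rewrite hornerXsubC subrr mulr0 add0r hornerC mulr1.
rewrite tmodE -polyC1 coprimep_expr // coprimep_XsubC /root w1.
by rewrite oppr_eq0 oner_eq0.
Qed.

Lemma tminus1_mul_eqmod_ybar_mul (r : {poly 'F_p}) :
  exists s, eqmod (('X - 1) * r) (ybar p * s).
Proof.
have [w -> /Bezout_eq1_coprimepP [[u v] /= uv1]] := ybar_factor.
exists (u * r); rewrite /eqmod.
have -> : ('X - 1) * r - ('X - 1) * w * (u * r) = ('X - 1) * r * (1 - u * w).
  by ring.
by rewrite -uv1 addrAC subrr add0r mulrA dvdp_mull.
Qed.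

End PrimeField.

Theorem mainTheorem19 (p : nat) (p_prime : prime p) (p_odd : odd p) :
  forall q : {poly 'F_p}, in_gen_submodule q <-> in_tminus1_ideal q.
Proof.
move=> q; split => [[a q_orbit] | [r q_ideal]].
  set S := (X in eqmod q X) in q_orbit.
  have /factor_theorem [r S_eq] : root S 1.
    rewrite /root /S horner_sum big1 // => c _; rewrite horner_sum big1 // => m _.
    by rewrite hornerZ horner1_act ybar_horner1 // mulr0.
  by exists r; rewrite mulrC -polyC1 -S_eq.
have [s ideal_ybar] := tminus1_mul_eqmod_ybar_mul p_prime p_odd r.
have [a orbit] := in_gen_submodule_ybar_mul p_prime s.
by exists a; apply: eqmod_trans q_ideal (eqmod_trans ideal_ybar orbit).
Qed.
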